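(* Let $h_1,h_2,g_1,g_2>0$ be real numbers. For $\Delta_1,\Delta_2>0$ and $\Omega\subseteq\{1,2\}$ define (logarithms base $2$, $[x]^+=\max\{x,0\}$) \begin{align*} R(\emptyset;\Delta_1,\Delta_2)&=\Big[\log\Big(1+\tfrac{h_1^2}{1+\Delta_1}+\tfrac{h_2^2}{1+\Delta_2}\Big)\Big]^+,\\ R(\{1\};\Delta_1,\Delta_2)&=\Big[\log(1+g_1^2)+\log\Big(1+\tfrac{h_2^2}{1+\Delta_2}\Big)-\log\tfrac{1+\Delta_1}{\Delta_1}\Big]^+,\\ R(\{2\};\Delta_1,\Delta_2)&=\Big[\log(1+g_2^2)+\log\Big(1+\tfrac{h_1^2}{1+\Delta_1}\Big)-\log\tfrac{1+\Delta_2}{\Delta_2}\Big]^+,\\ R(\{1,2\};\Delta_1,\Delta_2)&=\Big[\log(1+g_1^2+g_2^2)-\log\tfrac{1+\Delta_1}{\Delta_1}-\log\tfrac{1+\Delta_2}{\Delta_2}\Big]^+, \end{align*} and consider the problem $\max_{\Delta_2>0}\max_{\Delta_1>0}\min_{\Omega\subseteq\{1,2\}}R(\Omega;\Delta_1,\Delta_2)$. Let $$\delta_1:=\frac{(1+g_1^2+g_2^2)(1+h_1^2+h_2^2)+(1+g_2^2)h_1^2h_2^2}{g_2^2(1+g_1^2+g_2^2)(1+h_1^2)},\qquad \delta_2:=\frac{(1+g_1^2)(1+h_2^2)}{g_2^2},$$ $\mathcal I_1=(0,\delta_1)$, $\mathcal I_2=[\delta_1,\delta_2)$, $\mathcal I_3=[\delta_2,\infty)$,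 and $A:=h_1^2(1+h_1^2)-h_2^2(1+h_1^2+g_1^2+g_2^2)$, $B:=2h_1^2(1+h_1^2)$, $C:=h_1^2(1+h_1^2+h_2^2)$, $\delta_3:=\frac{-B-\sqrt{B^2-4AC}}{2A}$. Then an optimal solution $(\Delta_1^*,\Delta_2^* )$ of this problem is: \begin{enumerate} \item if $A\ge 0$ or $\delta_3\in\mathcal I_3$: $\Delta_2^*=\delta_2$ and $\Delta_1^*=\frac{(1+h_1^2)\delta_2+(1+h_1^2+h_2^2)}{(g_1^2+g_2^2)\delta_2-(1+h_2^2)}=\frac{(1+h_1^2)\delta_2+(1+h_1^2+h_2^2)}{g_1^2(\delta_2+(1+h_2^2))}$; \item if $A<0$ and $\delta_3\in\mathcal I_1$: $\Delta_2^*=\delta_1$ and $\Delta_1^*=\frac{(1+h_1^2)\delta_1+(1+h_1^2+h_2^2)}{(g_1^2+g_2^2)\delta_1-(1+h_2^2)}=\frac{(1+g_2^2)(1+h_1^2)}{g_1^2}$; \item if $A<0$ and $\delta_3\in\mathcal I_2$: $\Delta_2^*=\delta_3$ and $\Delta_1^*=\frac{(1+h_1^2)\delta_3+(1+h_1^2+h_2^2)}{(g_1^2+g_2^2)\delta_3-(1+h_2^2)}$. \end{enumerate}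
   Context: This concerns the full-duplex two-relay Gaussian diamond network (source, relays $A_1,A_2$, destination) with channel magnitudes $h_i$ (source to relay $i$) and $g_i$ (relay $i$ to destination), in which relay $i$ performs quantize-map-and-forward with a Gaussian vector quantizer of distortion $\Delta_i$; $\min_\Omega R(\Omega;\Delta_1,\Delta_2)$ is the resulting achievable rate, and the problem is to choose the distortions maximizing it given the channel magnitudes. *)

From Stdlib Require Import Reals.
Open Scope R_scope.

Definition log2 (x : R) : R := ln x / ln 2.
Definition pos_part (x : R) : R := Rmax x 0.

(* Omega ⊆ {1,2} encoded as (1 ∈ Omega, 2 ∈ Omega). *)
Definition rate (h1 h2 g1 g2 : R) (Om : bool * bool) (D1 D2 : R) : R :=
  match Om with
  | (false, false) =>
      pos_part (log2 (1 + h1^2 / (1 + D1) + h2^2 / (1 + D2)))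
  | (true, false) =>
      pos_part (log2 (1 + g1^2) + log2 (1 + h2^2 / (1 + D2))
                - log2 ((1 + D1) / D1))
  | (false, true) =>
      pos_part (log2 (1 + g2^2) + log2 (1 + h1^2 / (1 + D1))
                - log2 ((1 + D2) / D2))
  | (true, true) =>
      pos_part (log2 (1 + g1^2 + g2^2) - log2 ((1 + D1) / D1)
                - log2 ((1 + D2) / D2))
  end.

Definition min_rate (h1 h2 g1 g2 D1 D2 : R) : R :=
  Rmin (Rmin (rate h1 h2 g1 g2 (false, false) D1 D2)
             (rate h1 h2 g1 g2 (true, false) D1 D2))
       (Rmin (rate h1 h2 g1 g2 (false, true) D1 D2)
             (rate h1 h2 g1 g2 (true, true) D1 D2)).

Definition is_optimal (h1 h2 g1 g2 D1 D2 : R) : Prop :=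
  0 < D1 /\ 0 < D2 /\
  forall E1 E2, 0 < E1 -> 0 < E2 ->
    min_rate h1 h2 g1 g2 E1 E2 <= min_rate h1 h2 g1 g2 D1 D2.

Definition delta1 (h1 h2 g1 g2 : R) : R :=
  ((1 + g1^2 + g2^2) * (1 + h1^2 + h2^2) + (1 + g2^2) * h1^2 * h2^2)
  / (g2^2 * (1 + g1^2 + g2^2) * (1 + h1^2)).
Definition delta2 (h1 h2 g1 g2 : R) : R :=
  (1 + g1^2) * (1 + h2^2) / g2^2.
Definition coefA (h1 h2 g1 g2 : R) : R :=
  h1^2 * (1 + h1^2) - h2^2 * (1 + h1^2 + g1^2 + g2^2).
Definition coefB (h1 : R) : R := 2 * h1^2 * (1 + h1^2).
Definition coefC (h1 h2 : R) : R := h1^2 * (1 + h1^2 + h2^2).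
Definition delta3 (h1 h2 g1 g2 : R) : R :=
  (- coefB h1 - sqrt (coefB h1 ^ 2 - 4 * coefA h1 h2 g1 g2 * coefC h1 h2))
  / (2 * coefA h1 h2 g1 g2).

Definition D1_of (h1 h2 g1 g2 d : R) : R :=
  ((1 + h1^2) * d + (1 + h1^2 + h2^2)) / ((g1^2 + g2^2) * d - (1 + h2^2)).

From Stdlib Require Import Reals Lra Psatz.
Open Scope R_scope.

(* Substituting a = D1/(1+D1), b = D2/(1+D2) and writing H_i = h_i^2, G_i = g_i^2, each
   rate becomes [log2 of a polynomial in (a, b)]^+ on the open unit square: the empty cut
   gives 1 + H1 (1-a) + H2 (1-b) and the full cut (1+G1+G2) a b, while the single-relay
   cuts give (1+G1)(1 + H2 (1-b)) a and (1+G2)(1 + H1 (1-a)) b.  The formula D1_of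
   expresses that the empty and full cuts are balanced.  At such a balanced point with
   value V, every (a, b) has some cut value <= V: where a and b both move away in the
   same direction one of the two balanced cuts decreases, and in a mixed quadrant either
   the single-relay cut monotone there is tight, or the sign of H1 a - H2 b puts the line
   H1 a + H2 b = const on the right side of the hyperbola a b = const.  Along the curve
   D1 = D1_of D2 that sign is the sign of A D2^2 + B D2 + C, whose positive root is
   delta3, and the single-relay cuts stay above the full cut exactly for D2 in
   [delta1, delta2]; delta2 (resp. delta1) is where the first (resp. second) of them
   becomes tight. *)

Lemma ln2_pos : 0 < ln 2.
Proof. rewrite <- ln_1; apply ln_increasing; lra. Qed.

Lemma log2_mult x y : 0 < x -> 0 < y -> log2 (x * y) = log2 x + log2 y.
Proof. intros; unfold log2; rewrite ln_mult by lra; field; apply Rgt_not_eq, ln2_pos. Qed.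

Lemma log2_Rinv x : 0 < x -> log2 (/ x) = - log2 x.
Proof. intros; unfold log2; rewrite ln_Rinv by lra; field; apply Rgt_not_eq, ln2_pos. Qed.

Lemma log2_le x y : 0 < x -> x <= y -> log2 x <= log2 y.
Proof.
  intros hx [hxy | <-]; [|lra].
  unfold log2; apply Rmult_le_compat_r.
  - left; apply Rinv_0_lt_compat, ln2_pos.
  - left; apply ln_increasing; lra.
Qed.

Lemma pos_part_log2_le x y : 0 < x -> x <= y -> pos_part (log2 x) <= pos_part (log2 y).
Proof. intros; apply Rle_max_compat_r, log2_le; auto. Qed.

Lemma div_one_plus_unit D : 0 < D -> 0 < D / (1 + D) < 1.
Proof.
  intros hD; split; [apply Rdiv_lt_0_compat; lra |].
  apply Rmult_lt_reg_r with (1 + D); [lra |]; field_simplify; lra.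
Qed.

Section CutValues.
Variables H1 H2 G1 G2 : R.

Definition cut_value (Om : bool * bool) (a b : R) : R :=
  match Om with
  | (false, false) => 1 + H1 * (1 - a) + H2 * (1 - b)
  | (true, false) => (1 + G1) * (1 + H2 * (1 - b)) * a
  | (false, true) => (1 + G2) * (1 + H1 * (1 - a)) * b
  | (true, true) => (1 + G1 + G2) * a * b
  end.

Lemma cut_value_pos Om a b : 0 <= H1 -> 0 <= H2 -> 0 <= G1 -> 0 <= G2 ->
  0 < a < 1 -> 0 < b < 1 -> 0 < cut_value Om a b.
Proof.
  intros; destruct Om as [[|] [|]]; simpl;
    repeat apply Rmult_lt_0_compat; nra.
Qed.

End CutValues.

Lemma rate_cut_value h1 h2 g1 g2 Om D1 D2 : 0 < D1 -> 0 < D2 ->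
  rate h1 h2 g1 g2 Om D1 D2 =
  pos_part (log2 (cut_value (h1^2) (h2^2) (g1^2) (g2^2) Om (D1 / (1 + D1)) (D2 / (1 + D2)))).
Proof.
  intros hD1 hD2.
  pose proof (pow2_ge_0 h1); pose proof (pow2_ge_0 h2).
  pose proof (pow2_ge_0 g1); pose proof (pow2_ge_0 g2).
  assert (hinv : forall D, 0 < D -> (1 + D) / D = / (D / (1 + D)))
    by (intros; field; lra).
  assert (hcompl : forall x D, 0 < D -> 1 + x / (1 + D) = 1 + x * (1 - D / (1 + D)))
    by (intros; field; lra).
  assert (ha : 0 < D1 / (1 + D1)) by (apply Rdiv_lt_0_compat; lra).
  assert (hb : 0 < D2 / (1 + D2)) by (apply Rdiv_lt_0_compat; lra).
  assert (hcompl_pos : forall x D, 0 <= x -> 0 < D -> 0 < 1 + x * (1 - D / (1 + D))).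
  { intros x D hx hD. rewrite <- hcompl by lra.
    assert (0 <= x / (1 + D)) by (apply Rle_mult_inv_pos; lra). lra. }
  destruct Om as [[|] [|]]; simpl; f_equal;
    rewrite ?hinv, ?log2_Rinv, ?hcompl by lra;
    [rewrite !log2_mult; try lra; try apply Rmult_lt_0_compat; auto; lra ..
    | f_equal; field; lra].
Qed.

Lemma min_rate_le_rate h1 h2 g1 g2 Om D1 D2 :
  min_rate h1 h2 g1 g2 D1 D2 <= rate h1 h2 g1 g2 Om D1 D2.
Proof.
  unfold min_rate, Rmin; destruct Om as [[|] [|]]; repeat destruct Rle_dec; lra.
Qed.

Lemma min_rate_glb h1 h2 g1 g2 D1 D2 x :
  (forall Om, x <= rate h1 h2 g1 g2 Om D1 D2) -> x <= min_rate h1 h2 g1 g2 D1 D2.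
Proof. intros; unfold min_rate; repeat apply Rmin_glb; auto. Qed.

Lemma is_optimal_of_cut_bound h1 h2 g1 g2 D1 D2 V : 0 < D1 -> 0 < D2 -> 0 < V ->
  (forall Om, V <= cut_value (h1^2) (h2^2) (g1^2) (g2^2) Om (D1 / (1 + D1)) (D2 / (1 + D2))) ->
  (forall a b, 0 < a < 1 -> 0 < b < 1 ->
     exists Om, cut_value (h1^2) (h2^2) (g1^2) (g2^2) Om a b <= V) ->
  is_optimal h1 h2 g1 g2 D1 D2.
Proof.
  intros hD1 hD2 hV hopt hbound; split; [exact hD1 | split; [exact hD2 |]].
  intros E1 E2 hE1 hE2.
  destruct (hbound _ _ (div_one_plus_unit E1 hE1) (div_one_plus_unit E2 hE2)) as [Om hOm].
  apply Rle_trans with (pos_part (log2 V)).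
  - eapply Rle_trans; [apply (min_rate_le_rate _ _ _ _ Om) |].
    rewrite rate_cut_value by lra; apply pos_part_log2_le; auto.
    apply cut_value_pos; try apply pow2_ge_0; apply div_one_plus_unit; assumption.
  - apply min_rate_glb; intros Om'.
    rewrite rate_cut_value by lra; apply pos_part_log2_le; auto.
Qed.

Lemma weighted_sum_ge_or_prod_le u v x y x0 y0 : 0 <= u -> 0 < v -> 0 < y ->
  (y - y0) * (u * x0 - v * y0) <= 0 ->
  u * x0 + v * y0 <= u * x + v * y \/ x * y <= x0 * y0.
Proof.
  intros hu hv hy htan.
  destruct (Rle_or_lt (u * x0 + v * y0) (u * x + v * y)) as [hs | hs]; [now left | right].
  apply Rnot_lt_le; intros hprod.
  assert (u * (x0 * y0) <= u * (x * y)) by (apply Rmult_le_compat_l; lra).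
  assert (y * (u * x + v * y) < y * (u * x0 + v * y0)) by (apply Rmult_lt_compat_l; lra).
  assert (0 <= v * (y - y0) ^ 2) by (apply Rmult_le_pos; [lra | apply pow2_ge_0]).
  nra.
Qed.

Section Dominance.
Variables H1 H2 G1 G2 : R.
Hypotheses (H1_pos : 0 < H1) (H2_pos : 0 < H2) (G1_ge0 : 0 <= G1) (G2_ge0 : 0 <= G2).

Local Notation cut := (cut_value H1 H2 G1 G2).

Lemma cut_0_antitone a b a' b' : H1 * a' + H2 * b' <= H1 * a + H2 * b ->
  cut (false, false) a b <= cut (false, false) a' b'.
Proof. simpl; lra. Qed.

Lemma cut_12_monotone a b a' b' : a * b <= a' * b' ->
  cut (true, true) a b <= cut (true, true) a' b'.
Proof. simpl; rewrite !Rmult_assoc; apply Rmult_le_compat_l; lra. Qed.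

Lemma cut_1_monotone a b a' b' : 0 <= a <= a' -> b' <= b <= 1 ->
  cut (true, false) a b <= cut (true, false) a' b'.
Proof.
  simpl; intros ha hb.
  apply Rmult_le_compat; [apply Rmult_le_pos; nra | lra | | lra].
  apply Rmult_le_compat_l; nra.
Qed.

Lemma cut_2_monotone a b a' b' : a' <= a <= 1 -> 0 <= b <= b' ->
  cut (false, true) a b <= cut (false, true) a' b'.
Proof.
  simpl; intros ha hb.
  apply Rmult_le_compat; [apply Rmult_le_pos; nra | lra | | lra].
  apply Rmult_le_compat_l; nra.
Qed.

Lemma cut_dominated ap bp a b :
  let V := cut (true, true) ap bp in
  cut (false, false) ap bp = V ->
  cut (true, false) ap bp = V \/ H1 * ap <= H2 * bp ->
  cut (false, true) ap bp = V \/ H2 * bp <= H1 * ap ->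
  0 < a < 1 -> 0 < b < 1 ->
  exists Om, cut Om a b <= V.
Proof.
  simpl; intros h0 h1 h2 ha hb.
  destruct (Rle_or_lt ap a) as [hap | hap]; destruct (Rle_or_lt bp b) as [hbp | hbp].
  - exists (false, false); rewrite <- h0; apply cut_0_antitone; nra.
  - destruct h2 as [h2 | h2].
    + exists (false, true); rewrite <- h2; apply cut_2_monotone; lra.
    + destruct (weighted_sum_ge_or_prod_le H2 H1 b a bp ap) as [hs | hs]; try nra.
      * exists (false, false); rewrite <- h0; apply cut_0_antitone; lra.
      * exists (true, true); apply cut_12_monotone; lra.
  - destruct h1 as [h1 | h1].
    + exists (true, false); rewrite <- h1; apply cut_1_monotone; lra.
    + destruct (weighted_sum_ge_or_prod_le H1 H2 a b ap bp) as [hs | hs]; try nra.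
      * exists (false, false); rewrite <- h0; apply cut_0_antitone; lra.
      * exists (true, true); apply cut_12_monotone; lra.
  - exists (true, true); apply cut_12_monotone; apply Rmult_le_compat; lra.
Qed.

Section DistortionCoordinates.
Variables D1 D2 : R.
Hypotheses (D1_pos : 0 < D1) (D2_pos : 0 < D2).

Local Notation a := (D1 / (1 + D1)).
Local Notation b := (D2 / (1 + D2)).

Lemma cut_0_sub_12 : (cut (false, false) a b - cut (true, true) a b) * ((1 + D1) * (1 + D2))
  = (1 + H1) * D2 + (1 + H1 + H2) - D1 * ((G1 + G2) * D2 - (1 + H2)).
Proof. simpl; field; lra. Qed.

Lemma cut_1_sub_12 : (cut (true, false) a b - cut (true, true) a b) * ((1 + D1) * (1 + D2))
  = D1 * ((1 + G1) * (1 + H2) - G2 * D2).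
Proof. simpl; field; lra. Qed.

Lemma cut_2_sub_12 : (cut (false, true) a b - cut (true, true) a b) * ((1 + D1) * (1 + D2))
  = D2 * ((1 + G2) * (1 + H1) - G1 * D1).
Proof. simpl; field; lra. Qed.

Lemma slope_sub : (H1 * a - H2 * b) * ((1 + D1) * (1 + D2))
  = H1 * D1 * (1 + D2) - H2 * D2 * (1 + D1).
Proof. field; lra. Qed.

Lemma balanced_point_dominates :
  D1 * ((G1 + G2) * D2 - (1 + H2)) = (1 + H1) * D2 + (1 + H1 + H2) ->
  G2 * D2 <= (1 + G1) * (1 + H2) -> G1 * D1 <= (1 + G2) * (1 + H1) ->
  G2 * D2 = (1 + G1) * (1 + H2) \/ H1 * D1 * (1 + D2) <= H2 * D2 * (1 + D1) ->
  G1 * D1 = (1 + G2) * (1 + H1) \/ H2 * D2 * (1 + D1) <= H1 * D1 * (1 + D2) ->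
  (forall Om, cut (true, true) a b <= cut Om a b) /\
  (forall a' b', 0 < a' < 1 -> 0 < b' < 1 -> exists Om, cut Om a' b' <= cut (true, true) a b).
Proof.
  intros hbal hG2 hG1 hs1 hs2.
  assert (hp : 0 < (1 + D1) * (1 + D2)) by nra.
  pose proof cut_0_sub_12 as e0; pose proof cut_1_sub_12 as e1.
  pose proof cut_2_sub_12 as e2; pose proof slope_sub as es.
  assert (h0 : cut (false, false) a b = cut (true, true) a b).
  { apply Rmult_eq_reg_r with ((1 + D1) * (1 + D2)); lra. }
  split.
  - intros [[|] [|]]; try lra; apply Rmult_le_reg_r with ((1 + D1) * (1 + D2)); auto.
    + assert (0 <= D1 * ((1 + G1) * (1 + H2) - G2 * D2)) by (apply Rmult_le_pos; lra). lra.
    + assert (0 <= D2 * ((1 + G2) * (1 + H1) - G1 * D1)) by (apply Rmult_le_pos; lra). lra.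
  - intros a' b' ha' hb'; apply cut_dominated; auto.
    + destruct hs1 as [hs1 | hs1]; [left | right].
      * apply Rmult_eq_reg_r with ((1 + D1) * (1 + D2)); [| lra].
        rewrite hs1, Rminus_diag, Rmult_0_r in e1; lra.
      * apply Rmult_le_reg_r with ((1 + D1) * (1 + D2)); lra.
    + destruct hs2 as [hs2 | hs2]; [left | right].
      * apply Rmult_eq_reg_r with ((1 + D1) * (1 + D2)); [| lra].
        rewrite hs2, Rminus_diag, Rmult_0_r in e2; lra.
      * apply Rmult_le_reg_r with ((1 + D1) * (1 + D2)); lra.
Qed.

End DistortionCoordinates.

End Dominance.

Lemma concave_quadratic_root A B C : A < 0 -> 0 < C ->
  let r := (- B - sqrt (B ^ 2 - 4 * A * C)) / (2 * A) in
  A * r ^ 2 + B * r + C = 0 /\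
  forall x, 0 < x -> (0 <= A * x ^ 2 + B * x + C <-> x <= r).
Proof.
  intros hA hC r.
  assert (hdisc : 0 <= B ^ 2 - 4 * A * C) by nra.
  set (s := sqrt (B ^ 2 - 4 * A * C)) in r.
  assert (hs2 : s * s = B ^ 2 - 4 * A * C) by (apply sqrt_sqrt; exact hdisc).
  assert (hs0 : 0 <= s) by apply sqrt_pos.
  assert (hsB : B < s) by nra.
  assert (hr : 2 * A * r = - B - s) by (unfold r; field; lra).
  (* the other root is negative, so the second factor keeps a constant sign on x > 0 *)
  assert (hfac : forall x, 2 * (A * x ^ 2 + B * x + C) = (x - r) * (2 * A * x + B - s)).
  { intros x; apply Rmult_eq_reg_l with (2 * A); [| lra].
    transitivity ((2 * A * x) ^ 2 + 2 * B * (2 * A * x) + 4 * A * C); [ring |].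
    replace ((2 * A) * ((x - r) * (2 * A * x + B - s)))
      with ((2 * A * x - 2 * A * r) * (2 * A * x + B - s)) by ring.
    rewrite hr; nra. }
  split.
  - specialize (hfac r); rewrite Rminus_diag, Rmult_0_l in hfac; lra.
  - intros x hx; specialize (hfac x).
    assert (hneg : 2 * A * x + B - s < 0) by nra.
    split; intros h; nra.
Qed.

Section Thresholds.
Variables h1 h2 g1 g2 : R.
Hypotheses (h1_pos : 0 < h1) (h2_pos : 0 < h2) (g1_pos : 0 < g1) (g2_pos : 0 < g2).

Local Notation H1 := (h1 ^ 2).
Local Notation H2 := (h2 ^ 2).
Local Notation G1 := (g1 ^ 2).
Local Notation G2 := (g2 ^ 2).
Local Notation balance_denom d := ((G1 + G2) * d - (1 + H2)).
Local Notation slope_poly d :=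
  (coefA h1 h2 g1 g2 * d ^ 2 + coefB h1 * d + coefC h1 h2).
Local Notation D1_of := (D1_of h1 h2 g1 g2).

Let H1_pos : 0 < H1 := pow_lt _ 2 h1_pos.
Let H2_pos : 0 < H2 := pow_lt _ 2 h2_pos.
Let G1_pos : 0 < G1 := pow_lt _ 2 g1_pos.
Let G2_pos : 0 < G2 := pow_lt _ 2 g2_pos.

Lemma D1_of_balances d : 0 < balance_denom d ->
  D1_of d * balance_denom d = (1 + H1) * d + (1 + H1 + H2).
Proof. intros; unfold D1_of; field; lra. Qed.

Lemma D1_of_pos d : 0 < d -> 0 < balance_denom d -> 0 < D1_of d.
Proof. intros; unfold D1_of; apply Rdiv_lt_0_compat; nra. Qed.

Lemma D1_of_slope d : 0 < balance_denom d ->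
  balance_denom d * (H1 * D1_of d * (1 + d) - H2 * d * (1 + D1_of d)) = slope_poly d.
Proof. intros; unfold D1_of, coefA, coefB, coefC; field; lra. Qed.

Lemma delta1_spec :
  G2 * (1 + G1 + G2) * (1 + H1) * delta1 h1 h2 g1 g2
  = (1 + G1 + G2) * (1 + H1 + H2) + (1 + G2) * H1 * H2.
Proof. unfold delta1; field; repeat split; apply Rgt_not_eq; nra. Qed.

Lemma delta2_spec : G2 * delta2 h1 h2 g1 g2 = (1 + G1) * (1 + H2).
Proof. unfold delta2; field; lra. Qed.

Lemma delta1_pos : 0 < delta1 h1 h2 g1 g2.
Proof.
  apply Rmult_lt_reg_l with (G2 * (1 + G1 + G2) * (1 + H1)); [nra |].
  rewrite Rmult_0_r, delta1_spec; nra.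
Qed.

Lemma delta1_lt_delta2 : delta1 h1 h2 g1 g2 < delta2 h1 h2 g1 g2.
Proof.
  apply Rmult_lt_reg_l with (G2 * (1 + G1 + G2) * (1 + H1)); [nra |].
  replace (G2 * (1 + G1 + G2) * (1 + H1) * delta2 h1 h2 g1 g2)
    with ((1 + G1 + G2) * (1 + H1) * (G2 * delta2 h1 h2 g1 g2)) by ring.
  rewrite delta1_spec, delta2_spec; nra.
Qed.

Lemma balance_denom_pos d : delta1 h1 h2 g1 g2 <= d -> 0 < balance_denom d.
Proof.
  intros hd.
  enough (0 < balance_denom (delta1 h1 h2 g1 g2)) by nra.
  apply Rmult_lt_reg_l with (G2 * (1 + G1 + G2) * (1 + H1)); [nra |].
  replace (G2 * (1 + G1 + G2) * (1 + H1) * balance_denom (delta1 h1 h2 g1 g2))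
    with ((G1 + G2) * (G2 * (1 + G1 + G2) * (1 + H1) * delta1 h1 h2 g1 g2)
          - G2 * (1 + G1 + G2) * (1 + H1) * (1 + H2)) by ring.
  rewrite delta1_spec; nra.
Qed.

Lemma D1_of_gap d : 0 < balance_denom d ->
  balance_denom d * ((1 + G2) * (1 + H1) - G1 * D1_of d)
  = G2 * (1 + G1 + G2) * (1 + H1) * (d - delta1 h1 h2 g1 g2).
Proof.
  intros hM.
  transitivity ((1 + G2) * (1 + H1) * balance_denom d - G1 * (D1_of d * balance_denom d)); [ring |].
  rewrite D1_of_balances by exact hM.
  transitivity (G2 * (1 + G1 + G2) * (1 + H1) * d
                - G2 * (1 + G1 + G2) * (1 + H1) * delta1 h1 h2 g1 g2); [| ring].
  rewrite delta1_spec; ring.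
Qed.

Lemma G1_D1_of_le d : delta1 h1 h2 g1 g2 <= d -> G1 * D1_of d <= (1 + G2) * (1 + H1).
Proof.
  intros hd; pose proof (balance_denom_pos d hd) as hM.
  pose proof (D1_of_gap d hM) as hgap.
  assert (0 <= G2 * (1 + G1 + G2) * (1 + H1) * (d - delta1 h1 h2 g1 g2))
    by (apply Rmult_le_pos; nra).
  nra.
Qed.

Lemma G1_D1_of_delta1 : G1 * D1_of (delta1 h1 h2 g1 g2) = (1 + G2) * (1 + H1).
Proof.
  pose proof (balance_denom_pos _ (Rle_refl _)) as hM.
  pose proof (D1_of_gap _ hM) as hgap; rewrite Rminus_diag, Rmult_0_r in hgap; nra.
Qed.

Lemma G2_mul_le_of_le_delta2 d : d <= delta2 h1 h2 g1 g2 -> G2 * d <= (1 + G1) * (1 + H2).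
Proof. intros; rewrite <- delta2_spec; apply Rmult_le_compat_l; lra. Qed.

Lemma D1_of_delta2 : D1_of (delta2 h1 h2 g1 g2) =
  ((1 + H1) * delta2 h1 h2 g1 g2 + (1 + H1 + H2)) / (G1 * (delta2 h1 h2 g1 g2 + (1 + H2))).
Proof.
  unfold D1_of; f_equal.
  pose proof delta2_spec; lra.
Qed.

Lemma D1_of_delta1 : D1_of (delta1 h1 h2 g1 g2) = (1 + G2) * (1 + H1) / G1.
Proof. rewrite <- G1_D1_of_delta1; field; lra. Qed.

Lemma slope_poly_nonneg d : 0 < d -> 0 <= coefA h1 h2 g1 g2 -> 0 <= slope_poly d.
Proof.
  intros hd hA; unfold coefB, coefC.
  assert (0 <= coefA h1 h2 g1 g2 * d ^ 2) by (apply Rmult_le_pos; [lra | apply pow2_ge_0]).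
  nra.
Qed.

Lemma delta3_spec : coefA h1 h2 g1 g2 < 0 ->
  slope_poly (delta3 h1 h2 g1 g2) = 0 /\
  forall d, 0 < d -> (0 <= slope_poly d <-> d <= delta3 h1 h2 g1 g2).
Proof.
  intros hA; apply (concave_quadratic_root _ _ _ hA).
  unfold coefC; nra.
Qed.

Lemma is_optimal_D1_of_balance d : 0 < d -> 0 < balance_denom d ->
  G2 * d <= (1 + G1) * (1 + H2) -> G1 * D1_of d <= (1 + G2) * (1 + H1) ->
  G2 * d = (1 + G1) * (1 + H2) \/ slope_poly d <= 0 ->
  G1 * D1_of d = (1 + G2) * (1 + H1) \/ 0 <= slope_poly d ->
  is_optimal h1 h2 g1 g2 (D1_of d) d.
Proof.
  intros hd hM hG2 hG1 hs1 hs2.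
  pose proof (D1_of_pos d hd hM) as hD.
  pose proof (D1_of_slope d hM) as hslope.
  destruct (balanced_point_dominates H1 H2 G1 G2 H1_pos H2_pos (Rlt_le _ _ G1_pos)
              (Rlt_le _ _ G2_pos) (D1_of d) d hD hd) as [hmin hdom]; auto.
  - apply D1_of_balances, hM.
  - destruct hs1; [left | right]; nra.
  - destruct hs2; [left | right]; nra.
  - refine (is_optimal_of_cut_bound _ _ _ _ _ _ _ hD hd _ hmin hdom).
    apply cut_value_pos; try lra; apply div_one_plus_unit; assumption.
Qed.

Lemma is_optimal_D1_of d :
  delta1 h1 h2 g1 g2 <= d <= delta2 h1 h2 g1 g2 ->
  d = delta2 h1 h2 g1 g2 \/ slope_poly d <= 0 ->
  d = delta1 h1 h2 g1 g2 \/ 0 <= slope_poly d ->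
  is_optimal h1 h2 g1 g2 (D1_of d) d.
Proof.
  intros [hd1 hd2] hs1 hs2.
  pose proof delta1_pos.
  apply is_optimal_D1_of_balance; try lra.
  - apply balance_denom_pos, hd1.
  - apply G2_mul_le_of_le_delta2, hd2.
  - apply G1_D1_of_le, hd1.
  - destruct hs1 as [-> | hs1]; [left; apply delta2_spec | right; exact hs1].
  - destruct hs2 as [-> | hs2]; [left; apply G1_D1_of_delta1 | right; exact hs2].
Qed.

End Thresholds.

Theorem theorem1 (h1 h2 g1 g2 : R) :
  0 < h1 -> 0 < h2 -> 0 < g1 -> 0 < g2 ->
  let d1 := delta1 h1 h2 g1 g2 in
  let d2 := delta2 h1 h2 g1 g2 in
  let d3 := delta3 h1 h2 g1 g2 in
  let A := coefA h1 h2 g1 g2 in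
  ((0 <= A \/ d2 <= d3) ->
     is_optimal h1 h2 g1 g2 (D1_of h1 h2 g1 g2 d2) d2 /\
     D1_of h1 h2 g1 g2 d2 =
       ((1 + h1^2) * d2 + (1 + h1^2 + h2^2)) / (g1^2 * (d2 + (1 + h2^2)))) /\
  ((A < 0 /\ 0 < d3 /\ d3 < d1) ->
     is_optimal h1 h2 g1 g2 (D1_of h1 h2 g1 g2 d1) d1 /\
     D1_of h1 h2 g1 g2 d1 = (1 + g2^2) * (1 + h1^2) / g1^2) /\
  ((A < 0 /\ d1 <= d3 /\ d3 < d2) ->
     is_optimal h1 h2 g1 g2 (D1_of h1 h2 g1 g2 d3) d3).
Proof.
  intros hh1 hh2 hg1 hg2; cbv zeta.
  assert (hd1 : 0 < delta1 h1 h2 g1 g2) by (apply delta1_pos; assumption).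
  assert (hd12 : delta1 h1 h2 g1 g2 < delta2 h1 h2 g1 g2)
    by (apply delta1_lt_delta2; assumption).
  assert (hd3 := delta3_spec h1 h2 g1 g2 hh1).
  split; [| split].
  - intros hcase; split; [| apply D1_of_delta2; assumption].
    apply is_optimal_D1_of; auto; try lra.
    right; destruct (Rle_or_lt 0 (coefA h1 h2 g1 g2)) as [hA | hA].
    + apply slope_poly_nonneg; auto; lra.
    + destruct hcase as [hA' | hd23]; [lra |].
      apply (proj2 (hd3 hA) _); lra.
  - intros (hA & _ & hd31); split; [| apply D1_of_delta1; assumption].
    apply is_optimal_D1_of; auto; try lra.
    right; apply Rnot_lt_le; intros hpos.
    apply Rlt_le, (proj2 (hd3 hA) _ hd1) in hpos; lra.
  - intros (hA & hd13 & hd32); destruct (hd3 hA) as [hroot _].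
    apply is_optimal_D1_of; auto; lra.
Qed.
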